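(* Let $\xi,\eta\in\mathbb{R}$ and, for $x>0$, set $$K(x)=\frac{\ln x-9 \ln(1+x)+8 \ln(2+x)}{24}-\frac{18+33 x+14 x^2}{48 (1+x)^2 (2+x)},$$ $$M(x)=\psi(x)-\frac{28 x^4+87 x^3+73 x^2+3 x-12}{6 x (x+1)^3 (x+2)}-\frac{43\ln (x+1)-37\ln(x+2)}{6}.$$ Then the double inequality $\xi K(x)<M(x)<\eta K(x)$ holds for all $x\in(0,\infty)$ if and only if $\xi\ge4$ and $\eta\le0$.
   Context: $\Gamma$ is Euler's gamma function and $\psi=\Gamma'/\Gamma$ is the digamma function; $\ln$ is the natural logarithm. *)

From Stdlib Require Import Reals Lra Arith Factorial ClassicalEpsilon.
Open Scope R_scope.

Fixpoint rising_prod (x : R) (n : nat) : R :=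
  match n with
  | O => x
  | S m => rising_prod x m * (x + INR (S m))
  end.

Definition gamma_seq (x : R) (n : nat) : R :=
  INR (fact n) * Rpower (INR n) x / rising_prod x n.

(* Euler's gamma function (for x > 0), defined as the Gauss limit. *)
Definition Gamma (x : R) : R :=
  epsilon (inhabits 0) (fun g => Un_cv (gamma_seq x) g).

Definition digamma (x : R) : R :=
  epsilon (inhabits 0) (fun l => derivable_pt_lim Gamma x l) / Gamma x.

Definition K (x : R) : R :=
  (ln x - 9 * ln (1 + x) + 8 * ln (2 + x)) / 24
  - (18 + 33 * x + 14 * x ^ 2) / (48 * (1 + x) ^ 2 * (2 + x)).

Definition M (x : R) : R :=
  digamma x
  - (28 * x ^ 4 + 87 * x ^ 3 + 73 * x ^ 2 + 3 * x - 12)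
      / (6 * x * (x + 1) ^ 3 * (x + 2))
  - (43 * ln (x + 1) - 37 * ln (x + 2)) / 6.

From Stdlib Require Import Reals Lra Lia Arith Factorial ClassicalEpsilon.
From Coquelicot Require Import Coquelicot.
Open Scope R_scope.

(* The core is a telescoping criterion: if [h] tends to [0] along unit steps and the
   unit-step difference [h y - h (y + 1)] has a positive derivative, then [h < 0].
   For [h = a M + b K] that difference is elementary, by the functional equation of
   psi, and its derivative is [a dM + b dK] with explicit rational [dK], [dM].  The
   inequalities [4 dK > dM > 0] give [xi K < M] for [xi >= 4] and [M < eta K] for
   [eta <= 0].  Conversely, for [xi < 4] the criterion on a far half-line (using
   [y (4 dK - dM) <= 12 dK]) gives [M < xi K] there, and for [eta > 0] the divergence
   [eta K x -> -oo] as [x -> 0+] beats the lower bound [M > -68] on [(0, 1]]. *)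

Lemma ln_le_sub1 t : 0 < t -> ln t <= t - 1.
Proof.
  intros Ht. rewrite <- (ln_exp (t - 1)). apply ln_le; [exact Ht|].
  generalize (exp_ineq1_le (t - 1)); lra.
Qed.

Lemma ln_diff_bounds a b : 0 < a -> 0 < b ->
  (b - a) / b <= ln b - ln a <= (b - a) / a.
Proof.
  intros Ha Hb. split.
  - assert (H := ln_le_sub1 (a / b) (Rdiv_lt_0_compat _ _ Ha Hb)).
    rewrite ln_div in H by lra.
    replace ((b - a) / b) with (- (a / b - 1)) by (field; lra). lra.
  - assert (H := ln_le_sub1 (b / a) (Rdiv_lt_0_compat _ _ Hb Ha)).
    rewrite ln_div in H by lra.
    replace ((b - a) / a) with (b / a - 1) by (field; lra). lra.
Qed.

Lemma ln_nonneg a : 1 <= a -> 0 <= ln a.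
Proof. intros Ha. rewrite <- ln_1. apply ln_le; lra. Qed.

Lemma INR_S_pos n : 0 < INR (S n).
Proof. rewrite S_INR. generalize (pos_INR n); lra. Qed.

Lemma shifted_pos x n : 0 < x -> 0 < x + INR n.
Proof. generalize (pos_INR n); lra. Qed.

Lemma cv_const c : Un_cv (fun _ => c) c.
Proof. intros eps He. exists O. intros n _. unfold Rdist. rewrite Rminus_diag, Rabs_R0. lra. Qed.

Lemma cv_ext (u v : nat -> R) l : (forall n, u n = v n) -> Un_cv u l -> Un_cv v l.
Proof.
  intros H Hu eps He. destruct (Hu eps He) as [N HN].
  exists N. intros n Hn. rewrite <- H. auto.
Qed.

Lemma cv_succ (u : nat -> R) l : Un_cv u l -> Un_cv (fun n => u (S n)) l.
Proof.
  intros Hu. apply (cv_ext (fun n => u (n + 1)%nat)); [intros n; f_equal; lia|].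
  apply CV_shift'. exact Hu.
Qed.

Lemma inv_shift_cv x : 0 < x -> Un_cv (fun n => / (x + INR n)) 0.
Proof.
  intros Hx. apply cv_infty_cv_0. intros B.
  destruct (INR_unbounded (Rabs B)) as [N HN]. exists N. intros n Hn.
  assert (INR N <= INR n) by (apply le_INR; lia).
  generalize (Rle_abs B); lra.
Qed.

Lemma cv_at_infinity (g : R -> R) x : 0 < x -> ex_derive g 0 -> g 0 = 0 ->
  Un_cv (fun n => g (/ (x + INR n))) 0.
Proof.
  intros Hx Hg H0. rewrite <- H0. apply continuity_seq; [|apply inv_shift_cv; exact Hx].
  apply continuity_pt_filterlim.
  apply (ex_derive_continuous (K := R_AbsRing) (V := R_NormedModule)), Hg.
Qed.

Section TelescopingIncrements.
Variables (u : nat -> R) (c : R).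
Hypothesis c_nonneg : 0 <= c.
Hypothesis increment_bounds :
  forall k, 0 <= u (S k) - u k <= c / INR (S k) - c / INR (S (S k)).

Lemma increments_growing : Un_growing u.
Proof. intros k. generalize (increment_bounds k); lra. Qed.

Lemma increments_tail n m : (n <= m)%nat -> u m - u n <= c / INR (S n) - c / INR (S m).
Proof.
  induction 1 as [|m _ IH]; [lra|].
  generalize (increment_bounds m); lra.
Qed.

Lemma increments_cv : exists l, Un_cv u l.
Proof.
  destruct (growing_cv u increments_growing) as [l Hl]; [|exists l; exact Hl].
  exists (u O + c). intros z [n ->].
  assert (H := increments_tail O n (Nat.le_0_l n)).
  assert (0 <= c / INR (S n)) by (apply Rdiv_le_0_compat; [lra | apply INR_S_pos]).
  change (INR (S O)) with 1 in H. rewrite Rdiv_1_r in H. lra.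
Qed.

Lemma increments_limit_bound l n : Un_cv u l -> 0 <= l - u n <= c / INR (S n).
Proof.
  intros Hl. split.
  - generalize (growing_ineq u l increments_growing Hl n); lra.
  - assert (l <= u n + c / INR (S n)); [|lra].
    apply (@Rle_cv_lim u (fun _ => u n + c / INR (S n))); [|exact Hl|apply cv_const].
    intros m. destruct (le_lt_dec n m) as [Hnm|Hmn].
    + assert (H := increments_tail n m Hnm).
      assert (0 <= c / INR (S m)) by (apply Rdiv_le_0_compat; [lra | apply INR_S_pos]).
      lra.
    + assert (u m <= u n) by (apply tech9; [exact increments_growing | lia]).
      assert (0 <= c / INR (S n)) by (apply Rdiv_le_0_compat; [lra | apply INR_S_pos]).
      lra.
Qed.

End TelescopingIncrements.

Definition seq_lim (u : nat -> R) : R := epsilon (inhabits 0) (fun l => Un_cv u l).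

Lemma seq_lim_cv u : (exists l, Un_cv u l) -> Un_cv u (seq_lim u).
Proof. intros H. exact (epsilon_spec _ _ H). Qed.

(** Euler's Gamma function as the exponential of a limit of logarithms. *)

Definition log_sum (y : R) (n : nat) : R := sum_f_R0 (fun k => ln (y + INR k)) n.
Definition inv_sum (y : R) (n : nat) : R := sum_f_R0 (fun k => / (y + INR k)) n.

(* [ln (gamma_seq y (n + 1))] and its derivative in [y]. *)
Definition log_gamma_seq (n : nat) (y : R) : R :=
  ln (INR (fact (S n))) + y * ln (INR (S n)) - log_sum y (S n).
Definition digamma_seq (n : nat) (y : R) : R := ln (INR (S n)) - inv_sum y (S n).

Lemma rising_prod_ln y n : 0 < y -> 0 < rising_prod y n /\ ln (rising_prod y n) = log_sum y n.
Proof.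
  intros Hy. induction n as [|n [Hpos Hln]].
  - unfold log_sum. simpl. rewrite Rplus_0_r. split; [exact Hy | reflexivity].
  - simpl rising_prod. assert (0 < y + INR (S n)) by (apply shifted_pos, Hy).
    split; [apply Rmult_lt_0_compat; assumption|].
    rewrite ln_mult, Hln by assumption. reflexivity.
Qed.

Lemma gamma_seq_exp y n : 0 < y -> gamma_seq y (S n) = exp (log_gamma_seq n y).
Proof.
  intros Hy. destruct (rising_prod_ln y (S n) Hy) as [Hpos Hln].
  unfold gamma_seq, log_gamma_seq, Rpower. rewrite <- Hln.
  unfold Rminus. rewrite !exp_plus, exp_Ropp, !exp_ln; [reflexivity | exact Hpos |].
  apply INR_fact_lt_0.
Qed.

Lemma log_gamma_seq_increment n y : 0 < y ->
  0 <= log_gamma_seq (S n) y - log_gamma_seq n y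
    <= y * (1 + y) / INR (S n) - y * (1 + y) / INR (S (S n)).
Proof.
  intros Hy.
  assert (E : log_gamma_seq (S n) y - log_gamma_seq n y =
    ln (INR (S n) + 1) - ln (y + INR (S n) + 1) + y * (ln (INR (S n) + 1) - ln (INR (S n)))).
  { unfold log_gamma_seq, log_sum. rewrite (tech5 _ (S n)).
    change (fact (S (S n))) with (S (S n) * fact (S n))%nat.
    rewrite mult_INR, ln_mult by (apply INR_S_pos || apply INR_fact_lt_0).
    rewrite (S_INR (S n)). replace (y + (INR (S n) + 1)) with (y + INR (S n) + 1) by ring. ring. }
  rewrite E, (S_INR (S n)). set (m := INR (S n)).
  assert (Hm : 0 < m) by apply INR_S_pos.
  destruct (ln_diff_bounds m (m + 1)) as [A1 A2]; [lra | lra |].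
  destruct (ln_diff_bounds (m + 1) (y + m + 1)) as [B1 B2]; [lra | lra |].
  assert (y * ((m + 1 - m) / (m + 1)) <= y * (ln (m + 1) - ln m) <= y * ((m + 1 - m) / m)).
  { split; apply Rmult_le_compat_l; lra. }
  assert (y * ((m + 1 - m) / (m + 1)) = (y + m + 1 - (m + 1)) / (m + 1)) by (field; lra).
  assert (y * ((m + 1 - m) / m) - (y + m + 1 - (m + 1)) / (y + m + 1)
          <= y * (1 + y) / m - y * (1 + y) / (m + 1)).
  { replace (y * ((m + 1 - m) / m) - (y + m + 1 - (m + 1)) / (y + m + 1))
      with (y * (1 + y) / (m * (y + m + 1))) by (field; lra).
    replace (y * (1 + y) / m - y * (1 + y) / (m + 1)) with (y * (1 + y) / (m * (m + 1)))
      by (field; lra).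
    apply Rmult_le_compat_l; [nra|]. apply Rinv_le_contravar; nra. }
  lra.
Qed.

Definition log_gamma (y : R) : R := seq_lim (fun n => log_gamma_seq n y).

Lemma log_gamma_cv y : 0 < y -> Un_cv (fun n => log_gamma_seq n y) (log_gamma y).
Proof.
  intros Hy. apply seq_lim_cv. apply (increments_cv _ (y * (1 + y))); [nra|].
  intros k. apply log_gamma_seq_increment, Hy.
Qed.

Lemma Gamma_exp y : 0 < y -> Gamma y = exp (log_gamma y).
Proof.
  intros Hy.
  assert (Hcv : Un_cv (gamma_seq y) (exp (log_gamma y))).
  { apply (CV_shift _ 1). apply (cv_ext (fun n => exp (log_gamma_seq n y))).
    { intros n. rewrite Nat.add_1_r. symmetry. apply gamma_seq_exp, Hy. }
    apply continuity_seq; [apply derivable_continuous_pt, derivable_exp|].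
    apply log_gamma_cv, Hy. }
  apply (UL_sequence (gamma_seq y)); [apply seq_lim_cv; exists (exp (log_gamma y))|]; exact Hcv.
Qed.

Lemma log_sum_derive m y : 0 < y -> is_derive (fun z => log_sum z m) y (inv_sum y m).
Proof.
  intros Hy. induction m as [|m IH].
  - unfold log_sum, inv_sum. simpl. auto_derive; [lra | field; lra].
  - apply (is_derive_plus (fun z => log_sum z m) (fun z => ln (z + INR (S m)))); [exact IH|].
    assert (0 < y + INR (S m)) by (apply shifted_pos, Hy).
    set (c := INR (S m)) in *. auto_derive; [lra | field; lra].
Qed.

Lemma log_gamma_seq_derive n y : 0 < y ->
  derivable_pt_lim (log_gamma_seq n) y (digamma_seq n y).
Proof.
  intros Hy. apply is_derive_Reals. unfold log_gamma_seq, digamma_seq.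
  apply (is_derive_minus (fun z => ln (INR (fact (S n))) + z * ln (INR (S n)))
    (fun z => log_sum z (S n))); [|apply log_sum_derive, Hy].
  set (c := INR (S n)). auto_derive; [exact I | ring].
Qed.

Lemma digamma_seq_increment n y : 0 < y ->
  0 <= digamma_seq (S n) y - digamma_seq n y
    <= (1 + y) / INR (S n) - (1 + y) / INR (S (S n)).
Proof.
  intros Hy.
  assert (E : digamma_seq (S n) y - digamma_seq n y =
    ln (INR (S n) + 1) - ln (INR (S n)) - / (y + INR (S n) + 1)).
  { unfold digamma_seq, inv_sum. rewrite (tech5 _ (S n)), (S_INR (S n)).
    replace (y + (INR (S n) + 1)) with (y + INR (S n) + 1) by ring. ring. }
  rewrite E, (S_INR (S n)). set (m := INR (S n)).
  assert (Hm : 0 < m) by apply INR_S_pos.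
  destruct (ln_diff_bounds m (m + 1)) as [A1 A2]; [lra | lra |].
  assert (/ (y + m + 1) <= (m + 1 - m) / (m + 1)).
  { replace ((m + 1 - m) / (m + 1)) with (/ (m + 1)) by (field; lra).
    apply Rinv_le_contravar; lra. }
  assert ((m + 1 - m) / m - / (y + m + 1) <= (1 + y) / m - (1 + y) / (m + 1)).
  { replace ((m + 1 - m) / m - / (y + m + 1)) with ((1 + y) / (m * (y + m + 1))) by (field; lra).
    replace ((1 + y) / m - (1 + y) / (m + 1)) with ((1 + y) / (m * (m + 1))) by (field; lra).
    apply Rmult_le_compat_l; [lra|]. apply Rinv_le_contravar; nra. }
  lra.
Qed.

Definition Psi (y : R) : R := seq_lim (fun n => digamma_seq n y).

Lemma Psi_cv y : 0 < y -> Un_cv (fun n => digamma_seq n y) (Psi y).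
Proof.
  intros Hy. apply seq_lim_cv. apply (increments_cv _ (1 + y)); [lra|].
  intros k. apply digamma_seq_increment, Hy.
Qed.

(* Locally uniform convergence, needed to differentiate the limit [log_gamma]. *)
Lemma Psi_approx y n : 0 < y -> 0 <= Psi y - digamma_seq n y <= (1 + y) / INR (S n).
Proof.
  intros Hy.
  apply (increments_limit_bound (fun k => digamma_seq k y) (1 + y)); [lra | | apply Psi_cv, Hy].
  intros k. apply digamma_seq_increment, Hy.
Qed.

Lemma log_gamma_derive x : 0 < x -> derivable_pt_lim log_gamma x (Psi x).
Proof.
  intros Hx.
  assert (Hr : 0 < x / 2) by lra.
  set (r := mkposreal (x / 2) Hr).
  assert (Hball : forall y, Boule x r y -> x / 2 < y < 3 * x / 2).
  { intros y Hy. unfold Boule in Hy. simpl in Hy. apply Rabs_def2 in Hy. lra. }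
  apply (CVU_derivable log_gamma_seq digamma_seq log_gamma Psi x r).
  - intros eps He. destruct (INR_unbounded ((1 + 3 * x / 2) / eps)) as [N HN].
    exists N. intros n y Hn Hy. destruct (Hball y Hy) as [Hy1 Hy2].
    destruct (Psi_approx y n) as [U1 U2]; [lra|].
    rewrite Rabs_right by lra.
    assert (INR N <= INR n) by (apply le_INR; lia).
    assert (Hn1 : 0 < INR (S n)) by apply INR_S_pos.
    assert ((1 + y) / INR (S n) <= (1 + 3 * x / 2) / INR (S n))
      by (apply Rmult_le_compat_r; [left; apply Rinv_0_lt_compat|]; lra).
    assert ((1 + 3 * x / 2) / INR (S n) < eps); [|lra].
    apply (Rmult_lt_reg_r (INR (S n) / eps)); [apply Rdiv_lt_0_compat; lra|].
    replace ((1 + 3 * x / 2) / INR (S n) * (INR (S n) / eps)) with ((1 + 3 * x / 2) / eps)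
      by (field; lra).
    replace (eps * (INR (S n) / eps)) with (INR (S n)) by (field; lra).
    rewrite S_INR. lra.
  - intros y Hy. apply log_gamma_cv. destruct (Hball y Hy); lra.
  - intros n y Hy. apply log_gamma_seq_derive. destruct (Hball y Hy); lra.
  - unfold Boule. simpl. rewrite Rminus_diag, Rabs_R0. lra.
Qed.

Lemma Gamma_derive x : 0 < x -> derivable_pt_lim Gamma x (exp (log_gamma x) * Psi x).
Proof.
  intros Hx. apply is_derive_Reals.
  apply (is_derive_ext_loc (fun z => exp (log_gamma z))).
  { exists (mkposreal x Hx). intros z Hz. symmetry. apply Gamma_exp.
    change (Rabs (z - x) < x) in Hz. apply Rabs_def2 in Hz. lra. }
  apply is_derive_Reals.
  apply (derivable_pt_lim_comp log_gamma exp); [apply log_gamma_derive, Hx |].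
  apply derivable_pt_lim_exp.
Qed.

Lemma digamma_Psi x : 0 < x -> digamma x = Psi x.
Proof.
  intros Hx. unfold digamma.
  assert (H : derivable_pt_lim Gamma x
     (epsilon (inhabits 0) (fun l => derivable_pt_lim Gamma x l))).
  { apply epsilon_spec. exists (exp (log_gamma x) * Psi x). apply Gamma_derive, Hx. }
  rewrite (uniqueness_limite _ _ _ _ H (Gamma_derive x Hx)), Gamma_exp by exact Hx.
  field. apply Rgt_not_eq, exp_pos.
Qed.

Lemma inv_sum_lower y k : 0 < y -> ln (y + INR k + 1) - ln y <= inv_sum y k.
Proof.
  intros Hy. induction k as [|k IH].
  - unfold inv_sum. simpl. destruct (ln_diff_bounds y (y + 0 + 1)) as [_ B]; [lra | lra |].
    replace ((y + 0 + 1 - y) / y) with (/ (y + 0)) in B by (field; lra). lra.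
  - unfold inv_sum in *. rewrite tech5, S_INR. assert (H0 := pos_INR k).
    destruct (ln_diff_bounds (y + INR k + 1) (y + (INR k + 1) + 1)) as [_ B]; [lra | lra |].
    replace ((y + (INR k + 1) + 1 - (y + INR k + 1)) / (y + INR k + 1))
      with (/ (y + (INR k + 1))) in B by (field; lra). lra.
Qed.

Lemma inv_sum_upper y k : 0 < y -> inv_sum y k <= / y + ln (y + INR k) - ln y.
Proof.
  intros Hy. induction k as [|k IH].
  - unfold inv_sum. simpl. rewrite Rplus_0_r. lra.
  - unfold inv_sum in *. rewrite tech5, S_INR. assert (H0 := pos_INR k).
    destruct (ln_diff_bounds (y + INR k) (y + (INR k + 1))) as [B _]; lra.
Qed.

Lemma Psi_bounds y : 0 < y -> ln y - / y <= Psi y <= ln y.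
Proof.
  intros Hy. split.
  - apply (@Rle_cv_lim (fun n => ln y - / y - y * / INR (S n)) (fun n => digamma_seq n y));
      [| | apply Psi_cv, Hy].
    + intros n. unfold digamma_seq. generalize (inv_sum_upper y (S n) Hy) (INR_S_pos n).
      intros Hs Hn. destruct (ln_diff_bounds (INR (S n)) (y + INR (S n))) as [_ B]; [lra | lra |].
      replace ((y + INR (S n) - INR (S n)) / INR (S n)) with (y * / INR (S n)) in B
        by (field; lra). lra.
    + assert (Hlim : Un_cv (fun n => ln y - / y - y * / INR (S n)) (ln y - / y - y * 0)).
      { apply CV_minus; [apply cv_const|]. apply CV_mult; [apply cv_const|].
        apply (cv_ext (fun n => / (1 + INR n))).
        { intros n. rewrite S_INR, Rplus_comm. reflexivity. }
        apply inv_shift_cv; lra. }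
      rewrite Rmult_0_r, Rminus_0_r in Hlim. exact Hlim.
  - apply (@Rle_cv_lim (fun n => digamma_seq n y) (fun _ => ln y));
      [| apply Psi_cv, Hy | apply cv_const].
    intros n. unfold digamma_seq. generalize (inv_sum_lower y (S n) Hy) (INR_S_pos n). intros Hs Hn.
    assert (ln (INR (S n)) <= ln (y + INR (S n) + 1)) by (apply ln_le; lra). lra.
Qed.

Lemma inv_sum_shift x k : inv_sum x (S k) = / x + inv_sum (x + 1) k.
Proof.
  induction k as [|k IH].
  - unfold inv_sum. simpl. rewrite !Rplus_0_r. reflexivity.
  - unfold inv_sum in *. rewrite (tech5 _ (S k)), IH, (tech5 (fun j => / (x + 1 + INR j)) k).
    rewrite (S_INR (S k)). replace (x + (INR (S k) + 1)) with (x + 1 + INR (S k)) by ring. ring.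
Qed.

Lemma Psi_shift x : 0 < x -> Psi (x + 1) = Psi x + / x.
Proof.
  intros Hx. apply (UL_sequence (fun n => digamma_seq n (x + 1))); [apply Psi_cv; lra|].
  apply (cv_ext (fun n => digamma_seq n x + (/ x - / (x + INR (S (S n)))))).
  { intros n. unfold digamma_seq. assert (E := inv_sum_shift x (S n)).
    unfold inv_sum in E |- *. rewrite (tech5 (fun k => / (x + INR k)) (S n)) in E. lra. }
  replace (Psi x + / x) with (Psi x + (/ x - 0)) by ring.
  apply CV_plus; [apply Psi_cv, Hx|]. apply CV_minus; [apply cv_const|].
  apply (cv_succ (fun n => / (x + INR (S n)))), (cv_succ (fun n => / (x + INR n))).
  apply inv_shift_cv, Hx.
Qed.

(** A telescoping criterion for negativity on a half-line. *)

Lemma neg_of_increasing_steps (h : R -> R) Y :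
  (forall y, Y <= y -> h y < h (y + 1)) ->
  Un_cv (fun n => h (Y + INR n)) 0 -> h Y < 0.
Proof.
  intros Hinc Hlim.
  assert (Hstep : forall n, h (Y + INR n) < h (Y + INR (S n))).
  { intros n. rewrite S_INR, <- Rplus_assoc. apply Hinc. generalize (pos_INR n); lra. }
  assert (H1 : h (Y + INR 1) <= 0).
  { apply (growing_ineq (fun n => h (Y + INR n))); [|exact Hlim].
    intros n. left. apply Hstep. }
  assert (H0 := Hstep O). change (INR O) with 0 in H0. rewrite Rplus_0_r in H0. lra.
Qed.

Lemma steps_increasing_of_deriv (d d' : R -> R) Y :
  (forall y, Y <= y -> derivable_pt_lim d y (d' y)) ->
  (forall y, Y <= y -> 0 < d' y) ->
  forall y, Y <= y -> d y < d (y + 1).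
Proof.
  intros Hd Hpos y Hy.
  destruct (MVT_cor2 d d' y (y + 1)) as [c [Hc1 Hc2]]; [lra | intros c Hc; apply Hd; lra |].
  assert (0 < d' c) by (apply Hpos; lra). nra.
Qed.

(* If the unit-step difference [d y = h y - h (y + 1)] has a positive derivative on
   [[Y, oo)] and [h] tends to [0] along unit steps, then [d < 0], hence [h] increases
   along unit steps, hence [h < 0] on [[Y, oo)]. *)
Lemma neg_by_telescoping (h d d' : R -> R) Y :
  (forall y, Y <= y -> h y - h (y + 1) = d y) ->
  (forall y, Y <= y -> derivable_pt_lim d y (d' y)) ->
  (forall y, Y <= y -> 0 < d' y) ->
  (forall x, Y <= x -> Un_cv (fun n => h (x + INR n)) 0) ->
  forall y, Y <= y -> h y < 0.
Proof.
  intros Hstep Hd Hpos Hlim.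
  assert (Hd_neg : forall y, Y <= y -> d y < 0).
  { intros y Hy. apply neg_of_increasing_steps.
    - intros z Hz. apply (steps_increasing_of_deriv d d' Y); [exact Hd | exact Hpos | lra].
    - apply (cv_ext (fun n => h (y + INR n) - h (y + INR (S n)))).
      { intros n. rewrite S_INR, <- Rplus_assoc. apply Hstep. generalize (pos_INR n); lra. }
      rewrite <- (Rminus_0_r 0). apply CV_minus; [apply Hlim, Hy|].
      apply (cv_succ (fun n => h (y + INR n))), Hlim, Hy. }
  intros y Hy. apply neg_of_increasing_steps; [|apply Hlim, Hy].
  intros z Hz. generalize (Hstep z ltac:(lra)) (Hd_neg z ltac:(lra)). lra.
Qed.

Ltac pos_tac :=
  repeat (first [ apply Rmult_lt_0_compat | apply pow_lt | apply Rdiv_lt_0_compat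
                | apply Rinv_0_lt_compat ]); try lra.
Ltac nonzero_tac := repeat split; try lra; try (apply Rgt_not_eq; pos_tac).

Definition M_rational (y : R) : R :=
  (28 * y ^ 4 + 87 * y ^ 3 + 73 * y ^ 2 + 3 * y - 12) / (6 * y * (y + 1) ^ 3 * (y + 2)).
Definition M_elem (y : R) : R := - M_rational y - (43 * ln (y + 1) - 37 * ln (y + 2)) / 6.

(* By [psi (y + 1) = psi y + 1 / y], the unit-step difference of [M] is elementary. *)
Definition M_step (y : R) : R := - / y + M_elem y - M_elem (y + 1).

Lemma M_step_eq y : 0 < y -> M y - M (y + 1) = M_step y.
Proof.
  intros Hy. unfold M, M_step, M_elem, M_rational.
  rewrite (digamma_Psi (y + 1)), (digamma_Psi y), Psi_shift by lra. ring.
Qed.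

Definition dK (y : R) : R :=
  (72 + 211 * y + 238 * y ^ 2 + 115 * y ^ 3 + 20 * y ^ 4)
    / (24 * y * (y + 1) ^ 3 * (y + 2) ^ 3 * (y + 3) ^ 2).
Definition dM (y : R) : R :=
  (77 + 254 * y + 419 * y ^ 2 + 344 * y ^ 3 + 134 * y ^ 4 + 20 * y ^ 5)
    / (6 * (y + 1) ^ 4 * (y + 2) ^ 4 * (y + 3) ^ 2).

Lemma K_step_derive y : 0 < y -> derivable_pt_lim (fun z => K z - K (z + 1)) y (dK y).
Proof.
  intros Hy. apply is_derive_Reals. unfold K, dK. auto_derive; [nonzero_tac | field; nonzero_tac].
Qed.

Lemma M_step_derive y : 0 < y -> derivable_pt_lim M_step y (dM y).
Proof.
  intros Hy. apply is_derive_Reals. unfold M_step, M_elem, M_rational, dM.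
  auto_derive; [nonzero_tac | field; nonzero_tac].
Qed.

Ltac pow_pos y :=
  assert (0 < y ^ 2) by pos_tac; assert (0 < y ^ 3) by pos_tac; assert (0 < y ^ 4) by pos_tac;
  assert (0 < y ^ 5) by pos_tac; assert (0 < y ^ 6) by pos_tac.

Lemma dK_pos y : 0 < y -> 0 < dK y.
Proof. intros Hy. unfold dK. pow_pos y. apply Rdiv_lt_0_compat; [lra | pos_tac]. Qed.

Lemma dM_pos y : 0 < y -> 0 < dM y.
Proof. intros Hy. unfold dM. pow_pos y. apply Rdiv_lt_0_compat; [lra | pos_tac]. Qed.

Lemma four_dK_minus_dM_bounds y : 0 < y ->
  0 < 4 * dK y - dM y /\ y * (4 * dK y - dM y) <= 12 * dK y.
Proof.
  intros Hy. pow_pos y.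
  set (D := 6 * y * (y + 1) ^ 4 * (y + 2) ^ 4 * (y + 3) ^ 2).
  assert (HD : 0 < D) by (unfold D; pos_tac).
  assert (E1 : 4 * dK y - dM y =
    (144 + 561 * y + 927 * y ^ 2 + 736 * y ^ 3 + 279 * y ^ 4 + 41 * y ^ 5) / D).
  { unfold dK, dM, D. field. nonzero_tac. }
  assert (E2 : 12 * dK y - y * (4 * dK y - dM y) =
    (432 + 1770 * y + 2982 * y ^ 2 + 2538 * y ^ 3 + 1133 * y ^ 4 + 246 * y ^ 5 + 19 * y ^ 6) / D).
  { unfold dK, dM, D. field. nonzero_tac. }
  split.
  - rewrite E1. apply Rdiv_lt_0_compat; lra.
  - assert (0 < 12 * dK y - y * (4 * dK y - dM y)); [|lra].
    rewrite E2. apply Rdiv_lt_0_compat; lra.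
Qed.

(* Near [t = 0], [K (1 / t)] and [M (1 / t) - (psi (1 / t) - ln (1 / t))] are smooth
   and vanish at [0]; this gives their limits at infinity. *)
Definition K_at_inv (t : R) : R := (-9 * ln (1 + 1 * t) + 8 * ln (1 + 2 * t)) / 24
  - t * (18 * t ^ 2 + 33 * t + 14) / (48 * (1 + t) ^ 2 * (1 + 2 * t)).
Definition M_elem_at_inv (t : R) : R := (-43 * ln (1 + 1 * t) + 37 * ln (1 + 2 * t)) / 6
  - t * (28 + 87 * t + 73 * t ^ 2 + 3 * t ^ 3 - 12 * t ^ 4) / (6 * (1 + t) ^ 3 * (1 + 2 * t)).

Lemma ln_split a y : 0 < y -> 0 <= a -> ln (y + a) = ln y + ln (1 + a * / y).
Proof.
  intros Hy Ha. assert (0 <= a * / y) by (apply Rmult_le_pos; [lra | left; pos_tac]).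
  rewrite <- ln_mult by lra. f_equal. field. lra.
Qed.

Lemma K_at_inv_eq y : 0 < y -> K y = K_at_inv (/ y).
Proof.
  intros Hy. unfold K, K_at_inv. rewrite (Rplus_comm 1 y), (Rplus_comm 2 y).
  rewrite (ln_split 1 y), (ln_split 2 y) by lra.
  assert (0 < / y) by pos_tac. field. nonzero_tac.
Qed.

Lemma M_at_inv_eq y : 0 < y -> M y = (Psi y - ln y) + M_elem_at_inv (/ y).
Proof.
  intros Hy. unfold M, M_elem_at_inv. rewrite digamma_Psi by exact Hy.
  rewrite (ln_split 1 y), (ln_split 2 y) by lra.
  assert (0 < / y) by pos_tac. field. nonzero_tac.
Qed.

Lemma K_lim x : 0 < x -> Un_cv (fun n => K (x + INR n)) 0.
Proof.
  intros Hx. apply (cv_ext (fun n => K_at_inv (/ (x + INR n)))).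
  { intros n. symmetry. apply K_at_inv_eq, shifted_pos, Hx. }
  apply cv_at_infinity; [exact Hx | unfold K_at_inv; auto_derive; nonzero_tac |].
  unfold K_at_inv. rewrite !Rmult_0_r, !Rplus_0_r, ln_1. lra.
Qed.

Lemma M_lim x : 0 < x -> Un_cv (fun n => M (x + INR n)) 0.
Proof.
  intros Hx.
  apply (cv_ext (fun n => (Psi (x + INR n) - ln (x + INR n)) + M_elem_at_inv (/ (x + INR n)))).
  { intros n. symmetry. apply M_at_inv_eq, shifted_pos, Hx. }
  rewrite <- (Rplus_0_r 0). apply CV_plus.
  - (* [psi y - ln y] is squeezed between [- 1 / y] and [0]. *)
    intros eps He. destruct (inv_shift_cv x Hx eps He) as [N HN]. exists N. intros n Hn.
    specialize (HN n Hn). unfold Rdist in *. rewrite Rminus_0_r in *.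
    destruct (Psi_bounds (x + INR n)) as [B1 B2]; [apply shifted_pos, Hx|].
    assert (0 < / (x + INR n)) by (apply Rinv_0_lt_compat, shifted_pos, Hx).
    rewrite Rabs_right in HN by lra. rewrite Rabs_left1 by lra. lra.
  - apply cv_at_infinity; [exact Hx | unfold M_elem_at_inv; auto_derive; nonzero_tac |].
    unfold M_elem_at_inv. rewrite !Rmult_0_r, !Rplus_0_r, ln_1. lra.
Qed.

Lemma combination_neg a b Y : 0 < Y ->
  (forall y, Y <= y -> 0 < a * dM y + b * dK y) ->
  forall y, Y <= y -> a * M y + b * K y < 0.
Proof.
  intros HY Hpos.
  apply (neg_by_telescoping (fun z => a * M z + b * K z)
    (fun z => a * M_step z + b * (K z - K (z + 1))) (fun z => a * dM z + b * dK z) Y).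
  - intros y Hy. rewrite <- M_step_eq by lra. ring.
  - intros y Hy. apply is_derive_Reals.
    apply (is_derive_plus (fun z => a * M_step z) (fun z => b * (K z - K (z + 1))));
      apply is_derive_scal, is_derive_Reals; [apply M_step_derive | apply K_step_derive]; lra.
  - exact Hpos.
  - intros x Hx.
    assert (Hlim : Un_cv (fun n => a * M (x + INR n) + b * K (x + INR n)) (a * 0 + b * 0)).
    { apply CV_plus; apply CV_mult; try apply cv_const; [apply M_lim | apply K_lim]; lra. }
    rewrite !Rmult_0_r, Rplus_0_r in Hlim. exact Hlim.
Qed.

Lemma lower_bound xi x : 4 <= xi -> 0 < x -> xi * K x < M x.
Proof.
  intros Hxi Hx.
  assert (H : -1 * M x + xi * K x < 0); [|lra].
  apply (combination_neg (-1) xi x); [exact Hx | | lra].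
  intros y Hy. destruct (four_dK_minus_dM_bounds y) as [H4 _]; [lra|].
  assert (0 < dK y) by (apply dK_pos; lra). nra.
Qed.

Lemma upper_bound eta x : eta <= 0 -> 0 < x -> M x < eta * K x.
Proof.
  intros Heta Hx.
  assert (H : 1 * M x + - eta * K x < 0); [|lra].
  apply (combination_neg 1 (- eta) x); [exact Hx | | lra].
  intros y Hy. assert (0 < dM y) by (apply dM_pos; lra).
  assert (0 < dK y) by (apply dK_pos; lra). nra.
Qed.

(** Necessity: the constants [4] and [0] cannot be improved. *)

(* For [xi < 4], [M - xi K] has unit-step derivative [dM - xi dK > 0] far enough out. *)
Lemma lower_bound_sharp xi : xi < 4 -> exists x, 0 < x /\ M x < xi * K x.
Proof.
  intros Hxi. set (d := 4 - xi). assert (Hd : 0 < d) by (unfold d; lra).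
  set (Y := 12 / d + 1). assert (H12 : 0 < 12 / d) by (apply Rdiv_lt_0_compat; lra).
  assert (HY : 0 < Y) by (unfold Y; lra).
  exists Y. split; [exact HY|].
  assert (H : 1 * M Y + - xi * K Y < 0); [|lra].
  apply (combination_neg 1 (- xi) Y); [exact HY | | lra].
  intros y Hy. assert (Hy0 : 0 < y) by lra.
  destruct (four_dK_minus_dM_bounds y Hy0) as [_ Hbound].
  assert (HdK : 0 < dK y) by (apply dK_pos, Hy0).
  assert (Hdy : 12 < d * y).
  { replace 12 with (d * (12 / d)) by (field; lra). apply Rmult_lt_compat_l; [exact Hd|].
    unfold Y in Hy. lra. }
  assert (0 < y * (1 * dM y + - xi * dK y)); [|nra].
  replace xi with (4 - d) by (unfold d; ring). nra.
Qed.

Lemma div_le_div N D a b : 0 <= N -> N <= a -> 0 < b -> b <= D -> N / D <= a / b.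
Proof.
  intros HN HNa Hb HbD. unfold Rdiv. apply Rle_trans with (N * / b).
  - apply Rmult_le_compat_l; [exact HN|]. apply Rinv_le_contravar; assumption.
  - apply Rmult_le_compat_r; [left; apply Rinv_0_lt_compat, Hb | exact HNa].
Qed.

Lemma M_step_lower x : 0 < x -> x <= 1 -> -60 <= M_step x.
Proof.
  intros Hx Hx1. unfold M_step, M_elem.
  assert (X2 : 0 < x ^ 2 <= 1) by (split; [pos_tac | nra]).
  assert (X3 : 0 < x ^ 3 <= 1) by (split; [pos_tac | nra]).
  assert (C1 : - / x - M_rational x =
    - ((34 * x ^ 3 + 117 * x ^ 2 + 127 * x + 45) / (6 * (x + 1) ^ 3 * (x + 2)))).
  { unfold M_rational. field. nonzero_tac. }
  assert (C2 : (34 * x ^ 3 + 117 * x ^ 2 + 127 * x + 45) / (6 * (x + 1) ^ 3 * (x + 2)) <= 323 / 12).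
  { apply div_le_div; [lra | lra | lra |].
    assert (1 <= (x + 1) ^ 3) by (apply pow_R1_Rle; lra). nra. }
  assert (C3 : 0 <= M_rational (x + 1)).
  { unfold M_rational. left. apply Rdiv_lt_0_compat; [|pos_tac].
    assert (1 <= (x + 1) ^ 2) by (apply pow_R1_Rle; lra).
    assert (1 <= (x + 1) ^ 3) by (apply pow_R1_Rle; lra).
    assert (1 <= (x + 1) ^ 4) by (apply pow_R1_Rle; lra). lra. }
  assert (L1 : ln (x + 1) <= x) by (generalize (ln_le_sub1 (x + 1) ltac:(lra)); lra).
  assert (L2 : 0 <= ln (x + 2)) by (apply ln_nonneg; lra).
  assert (L3 : ln (x + 1 + 1) = ln (x + 2)) by (f_equal; ring).
  assert (L4 : ln (x + 1 + 2) <= x + 2) by (generalize (ln_le_sub1 (x + 1 + 2) ltac:(lra)); lra).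
  lra.
Qed.

Lemma K_shift_lower x : 0 < x -> x <= 1 -> -7 / 4 <= K (x + 1).
Proof.
  intros Hx Hx1. unfold K.
  assert (L1 : 0 <= ln (x + 1)) by (apply ln_nonneg; lra).
  assert (L2 : ln (1 + (x + 1)) <= 2) by (generalize (ln_le_sub1 (1 + (x + 1)) ltac:(lra)); lra).
  assert (L3 : 0 <= ln (2 + (x + 1))) by (apply ln_nonneg; lra).
  assert (0 < (x + 1) ^ 2 <= 4) by (split; [pos_tac | nra]).
  assert ((18 + 33 * (x + 1) + 14 * (x + 1) ^ 2) / (48 * (1 + (x + 1)) ^ 2 * (2 + (x + 1)))
          <= 140 / 576).
  { apply div_le_div; [lra | lra | lra | nra]. }
  lra.
Qed.

(* [M] stays bounded below on [(0, 1]], because [M x = M_step x + M (x + 1)] and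
   [M (x + 1) > 4 K (x + 1)]. *)
Lemma M_lower x : 0 < x -> x <= 1 -> -68 < M x.
Proof.
  intros Hx Hx1.
  assert (E := M_step_eq x Hx).
  assert (G := lower_bound 4 (x + 1) (Rle_refl 4) ltac:(lra)).
  generalize (M_step_lower x Hx Hx1) (K_shift_lower x Hx Hx1). lra.
Qed.

Lemma K_upper x : 0 < x -> x <= 1 -> K x <= ln x / 24 + 1.
Proof.
  intros Hx Hx1. unfold K.
  assert (L1 : 0 <= ln (1 + x)) by (apply ln_nonneg; lra).
  assert (L2 : ln (2 + x) <= 2) by (generalize (ln_le_sub1 (2 + x) ltac:(lra)); lra).
  assert (0 < (18 + 33 * x + 14 * x ^ 2) / (48 * (1 + x) ^ 2 * (2 + x))).
  { assert (0 < x ^ 2) by pos_tac. apply Rdiv_lt_0_compat; [lra | pos_tac]. }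
  lra.
Qed.

(* For [eta > 0], [eta K x -> -oo] as [x -> 0+] while [M] stays bounded below. *)
Lemma upper_bound_sharp eta : 0 < eta -> exists x, 0 < x /\ eta * K x < M x.
Proof.
  intros Heta. set (x := exp (24 * (- 68 / eta - 1))).
  assert (Hx : 0 < x) by apply exp_pos.
  assert (Hneg : 24 * (- 68 / eta - 1) < 0).
  { assert (0 < 68 / eta) by (apply Rdiv_lt_0_compat; lra).
    assert (- 68 / eta = - (68 / eta)) by (unfold Rdiv; ring). lra. }
  assert (Hx1 : x <= 1) by (rewrite <- exp_0; left; apply exp_increasing, Hneg).
  exists x. split; [exact Hx|].
  assert (Hln : ln x = 24 * (- 68 / eta - 1)) by apply ln_exp.
  assert (eta * K x <= eta * (ln x / 24 + 1))
    by (apply Rmult_le_compat_l; [lra | apply K_upper; assumption]).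
  assert (eta * (ln x / 24 + 1) = -68) by (rewrite Hln; field; lra).
  generalize (M_lower x Hx Hx1). lra.
Qed.

Theorem mainTheorem8 (xi eta : R) :
  (forall x : R, 0 < x -> xi * K x < M x /\ M x < eta * K x) <->
  (4 <= xi /\ eta <= 0).
Proof.
  split.
  - intros H. split.
    + destruct (Rlt_or_le xi 4) as [Hlt|Hge]; [|exact Hge].
      destruct (lower_bound_sharp xi Hlt) as [x [Hx Hm]]. destruct (H x Hx). lra.
    + destruct (Rle_or_lt eta 0) as [Hle|Hgt]; [exact Hle|].
      destruct (upper_bound_sharp eta Hgt) as [x [Hx Hm]]. destruct (H x Hx). lra.
  - intros [Hxi Heta] x Hx. split; [apply lower_bound | apply upper_bound]; assumption.
Qed.
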